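(* In a symmetric instance with $k$ signals ($2\le k\le n$), for every $s\in[-\infty,0]$ and every $s$-Pareto point collection $\mathcal P$, there exists a symmetric, direct and persuasive signaling scheme $\varphi^*$ with $k$ signals such that $u_{\mathcal S}(\varphi^* )=u_{\mathcal S}(\mathcal P)$ (and $u_{\mathcal R}(\varphi^* )=u_{\mathcal R}(\mathcal P)$).
   Context: Model: a receiver chooses one of the actions $[n]$; each action $i$ has a type $\theta_i$; the state $\boldsymbol\theta$ is drawn from a commonly known distribution $q$ over a finite set of type vectors; each type $t$ has receiver value $\rho(t)$ and sender value $\xi(t)$. A direct scheme with $k$ signals maps each state to a distribution over $k$ signals, each recommending an action; it is persuasive if for every signal $\sigma$ sent with positive probability recommending $i$, $\mathbb E[\rho(\theta_i)\mid\sigma]\ge\mathbb E[\rho(\theta_j)\mid\sigma]$ for all $j$; $u_{\mathcal S},u_{\mathcal R}$ denote expected utilities when the receiver follows. $\rho_E=\max_i\sum_{\boldsymbol\theta}q_{\boldsymbol\theta}\rho(\theta_i)$. Symmetric instance: $q_{\boldsymbol\theta}=q_{\boldsymbol\theta'}$ whenever $\boldsymbol\theta'$ is a permutation of $\boldsymbol\theta$; types in a state are pairwise distinct. For a permutation $\pi$ of $[n]$ let $(\pi\cdot\boldsymbol\theta)_{\pi(l)}=\theta_l$. A symmetric scheme is a direct scheme whose signals recommend actions $1,\dots,k$ and with $\varphi(\pi\cdot\boldsymbol\theta,\pi(i))=\varphi(\boldsymbol\theta,i)$ for all states, all $i\in[k]$, and all permutations $\pi$ of $[n]$ with $\pi([k])=[k]$.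 Identify each type $c$ with the point $(\rho(c),\xi(c))$. For a $k$-set $C$ of types, $q_C=\Pr[\{\theta_1,\dots,\theta_k\}=C]$. For $s\in(-\infty,0]$, $p\in\mathrm{conv}(C)$ corresponds to slope $s$ if it maximizes $y-sx$ over $(x,y)\in\mathrm{conv}(C)$; it corresponds to slope $-\infty$ if it maximizes the first coordinate over $\mathrm{conv}(C)$. A point collection $\mathcal P$ assigns to each $C$ with $q_C>0$ a point $p(C)=(p_{\mathcal R}(C),p_{\mathcal S}(C))\in\mathrm{conv}(C)$; $u_{\mathcal S}(\mathcal P)=\sum_Cq_Cp_{\mathcal S}(C)$, $u_{\mathcal R}(\mathcal P)=\sum_Cq_Cp_{\mathcal R}(C)$. $\mathcal P$ is $s$-Pareto if every $p(C)$ corresponds to slope $s$ and $u_{\mathcal R}(\mathcal P)\ge\rho_E$. *)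

From HB Require Import structures.
From mathcomp Require Import all_boot all_order all_algebra all_fingroup.
From mathcomp Require Import reals.
Set Implicit Arguments. Unset Strict Implicit. Unset Printing Implicit Defensive.
Import Order.TTheory GRing.Theory Num.Theory.
Local Open Scope ring_scope.

Section Model.
Variables (R : realType) (T : finType) (n : nat).

(* a state: a type vector, one type per action *)
Notation state := {ffun 'I_n -> T}.

Definition is_distribution (q : state -> R) :=
  (forall th, 0 <= q th) /\ \sum_th q th = 1.

Definition perm_act (pi : {perm 'I_n}) (th : state) : state :=
  [ffun m => th (pi^-1%g m)].

Definition symmetric_instance (q : state -> R) :=
  (forall (pi : {perm 'I_n}) th, q (perm_act pi th) = q th) /\
  (forall th, 0 < q th -> injective th).

(* rho_E = max_i sum_th q th rho(th_i)  (max of a nonempty list; n >= 1) *)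
Definition rhoE (q : state -> R) (rho : T -> R) : R :=
  let s := [seq \sum_th q th * rho (th i) | i : 'I_n] in
  \big[Num.max/head 0 s]_(x <- s) x.

Variable k : nat.

(* A direct scheme with k signals: phi th sigma is the probability of sending
   signal sigma in state th; signal sigma recommends action rec sigma. *)
Definition direct_scheme (phi : state -> 'I_k -> R) :=
  forall th, (forall sg, 0 <= phi th sg) /\ \sum_sg phi th sg = 1.

Definition sig_prob (q : state -> R) (phi : state -> 'I_k -> R) (sg : 'I_k) : R :=
  \sum_th q th * phi th sg.

Definition cond_exp (q : state -> R) (phi : state -> 'I_k -> R) (sg : 'I_k)
  (f : state -> R) : R :=
  (\sum_th q th * phi th sg * f th) / sig_prob q phi sg.

Definition persuasive (q : state -> R) (rho : T -> R) (rec : 'I_k -> 'I_n)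
  (phi : state -> 'I_k -> R) :=
  forall sg, 0 < sig_prob q phi sg ->
    forall j : 'I_n,
      cond_exp q phi sg (fun th => rho (th j)) <=
      cond_exp q phi sg (fun th => rho (th (rec sg))).

Definition u_scheme (q : state -> R) (v : T -> R) (rec : 'I_k -> 'I_n)
  (phi : state -> 'I_k -> R) : R :=
  \sum_th q th * \sum_sg phi th sg * v (th (rec sg)).

Definition symmetric_scheme (rec : 'I_k -> 'I_n) (phi : state -> 'I_k -> R) :=
  (forall sg, nat_of_ord (rec sg) = nat_of_ord sg) /\
  (forall (pi : {perm 'I_n}),
     (forall l : 'I_n, (l < k)%N -> (pi l < k)%N) ->
     forall th (sg sg' : 'I_k), pi (rec sg) = rec sg' ->
       phi (perm_act pi th) sg' = phi th sg).

Definition first_types (th : state) : {set T} :=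
  th @: [set i : 'I_n | (i < k)%N].

Definition qC (q : state -> R) (C : {set T}) : R :=
  \sum_(th | first_types th == C) q th.

(* p in conv(C), types identified with points (rho c, xi c) *)
Definition in_conv (rho xi : T -> R) (C : {set T}) (p : R * R) :=
  exists lam : T -> R,
    [/\ forall c, 0 <= lam c,
        forall c, c \notin C -> lam c = 0,
        \sum_c lam c = 1 &
        p = (\sum_c lam c * rho c, \sum_c lam c * xi c)].

(* slopes in [-oo, 0]: None is -oo, Some s is s *)
Definition corresponds_to_slope (rho xi : T -> R) (C : {set T})
  (s : option R) (p : R * R) :=
  in_conv rho xi C p /\
  forall p', in_conv rho xi C p' ->
    match s with
    | Some s0 => p'.2 - s0 * p'.1 <= p.2 - s0 * p.1
    | None => p'.1 <= p.1
    end.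

(* a point collection assigns to each k-set C with q_C > 0 a point in conv(C);
   values on other sets are irrelevant *)
Definition point_collection (q : state -> R) (rho xi : T -> R)
  (P : {set T} -> R * R) :=
  forall C : {set T}, #|C| = k -> 0 < qC q C -> in_conv rho xi C (P C).

Definition uS_pc (q : state -> R) (P : {set T} -> R * R) : R :=
  \sum_(C : {set T} | #|C| == k) qC q C * (P C).2.

Definition uR_pc (q : state -> R) (P : {set T} -> R * R) : R :=
  \sum_(C : {set T} | #|C| == k) qC q C * (P C).1.

Definition s_Pareto (q : state -> R) (rho xi : T -> R) (s : option R)
  (P : {set T} -> R * R) :=
  point_collection q rho xi P /\
  (forall C : {set T}, #|C| = k -> 0 < qC q C ->
     corresponds_to_slope rho xi C s (P C)) /\
  rhoE q rho <= uR_pc q P.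

End Model.

From HB Require Import structures.
From mathcomp Require Import all_boot all_order all_algebra all_fingroup.
From mathcomp Require Import reals.
From Stdlib Require Import ClassicalEpsilon.
Import Order.TTheory GRing.Theory Num.Theory.
Local Open Scope ring_scope.
Set Implicit Arguments. Unset Strict Implicit. Unset Printing Implicit Defensive.

(* Signal sg recommends action sg (viewed inside the first k actions).  Write
   every point P(C) as a convex combination of the types of C with weights
   lam C; in a state whose first k types form the set C, the scheme sends the
   signal recommending the action of type c with probability lam C c.
   (1) Combinatorics of the first k actions: for an injective state the
       signals are in bijection with the k-set of first types, and this set
       is invariant under permutations preserving [k].
   (2) Persuasiveness holds for every symmetric direct scheme on a symmetric
       instance with u_R >= rho_E: the gain of obeying signal sg rather than
       playing j is the same for all signals not recommending j, and zero for
       the one that does; the gains sum to u_R minus the value of j, which is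
       nonnegative since u_R >= rho_E, so each gain is nonnegative.
   (3) The scheme built from the weights is direct and symmetric, and its
       expected utility for any valuation v is sum_C q_C * (sum_c lam C c * v c);
       with v = xi, rho this gives u_S(P) and u_R(P), so (2) applies.
   Only the convexity data and u_R(P) >= rho_E are used, not the slopes. *)

Section FirstActions.
Variables (T : finType) (n k : nat) (k_le_n : (k <= n)%N).

Definition first_act (sg : 'I_k) : 'I_n := widen_ord k_le_n sg.

Lemma first_act_inj : injective first_act.
Proof. by move=> a b /(congr1 val) /= /val_inj. Qed.

Lemma first_typesE (th : {ffun 'I_n -> T}) :
  first_types k th = [set th (first_act sg) | sg : 'I_k].
Proof.
apply/setP=> c; apply/imsetP/imsetP => [[i]|[sg _ ->]].
  by rewrite inE => lt_ik ->; exists (Ordinal lt_ik) => //; congr (th _); exact: val_inj.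
by exists (first_act sg); rewrite // inE /= ltn_ord.
Qed.

Lemma card_first_types (th : {ffun 'I_n -> T}) :
  injective th -> #|first_types k th| = k.
Proof.
move=> th_inj; rewrite first_typesE card_imset ?card_ord //.
by move=> a b /th_inj /first_act_inj.
Qed.

Lemma sum_first_types {R : nmodType} (th : {ffun 'I_n -> T}) (g : T -> R) :
  #|first_types k th| = k ->
  (forall c, c \notin first_types k th -> g c = 0) ->
  \sum_(sg : 'I_k) g (th (first_act sg)) = \sum_c g c.
Proof.
move=> card_k g_supp.
rewrite (bigID (mem (first_types k th))) /= [X in _ + X]big1 ?addr0; last first.
  by move=> c /g_supp.
rewrite first_typesE big_imset //; apply/imset_injP.
by move: card_k; rewrite first_typesE => ->; rewrite card_ord.
Qed.

Lemma perm_act_inj (pi : {perm 'I_n}) : injective (@perm_act T n pi).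
Proof.
move=> th th' /(congr1 (fun f : {ffun 'I_n -> T} => f (pi _))) eq_pi.
by apply/ffunP=> m; have := eq_pi m; rewrite !ffunE permK.
Qed.

Lemma first_types_perm (pi : {perm 'I_n}) (th : {ffun 'I_n -> T}) :
  (forall l : 'I_n, (l < k)%N -> (pi l < k)%N) ->
  first_types k (perm_act pi th) = first_types k th.
Proof.
move=> pi_k; set K := [set i : 'I_n | (i < k)%N].
have piK : pi @: K = K.
  apply/eqP; rewrite eqEcard card_imset ?leqnn ?andbT; last exact: perm_inj.
  by apply/subsetP=> x /imsetP [l]; rewrite !inE => /pi_k lt_k ->.
have piVK : (pi^-1)%g @: K = K.
  rewrite -{1}piK -imset_comp.
  by under eq_imset => x do rewrite /= permK; rewrite imset_id.
rewrite /first_types -/K (eq_imset _ (g := th \o (pi^-1)%g)); last first.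
  by move=> m; rewrite /perm_act ffunE.
by rewrite imset_comp piVK.
Qed.

End FirstActions.

Section Persuasion.
Variables (R : realType) (T : finType) (n k : nat) (k_le_n : (k <= n)%N).
Variables (q : {ffun 'I_n -> T} -> R) (rho : T -> R).
Hypothesis q_sym : forall (pi : {perm 'I_n}) th, q (perm_act pi th) = q th.

Notation first_act := (first_act k_le_n).

Lemma action_value_le_rhoE (j : 'I_n) :
  \sum_th q th * rho (th j) <= rhoE q rho.
Proof.
rewrite /rhoE; apply: (@le_bigmax_seq _ _ _ _ _ _ xpredT id) => //.
by apply: (map_f (fun i => \sum_th q th * rho (th i))); rewrite mem_enum.
Qed.

Variable phi : {ffun 'I_n -> T} -> 'I_k -> R.

(* Unnormalised expected gain of obeying signal sg instead of playing j. *)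
Definition gain (sg : 'I_k) (j : 'I_n) : R :=
  \sum_th q th * phi th sg * (rho (th (first_act sg)) - rho (th j)).

Lemma gain_recommended (a : 'I_k) : gain a (first_act a) = 0.
Proof. by rewrite /gain big1 // => th _; rewrite subrr mulr0. Qed.

(* Symmetry: two signals not recommending j have the same gain against j;
   relabel states by the transposition of the two recommended actions. *)
Lemma gain_swap (a sg : 'I_k) (j : 'I_n) :
  symmetric_scheme first_act phi ->
  first_act a != j -> first_act sg != j -> gain a j = gain sg j.
Proof.
move=> [_ phi_sym] a_j sg_j; pose pi := tperm (first_act a) (first_act sg).
have pi_k (l : 'I_n) : (l < k)%N -> (pi l < k)%N.
  by rewrite /pi; case: tpermP => // _ _; rewrite /= ltn_ord.
rewrite /gain (reindex_inj (@perm_act_inj T n pi)); apply: eq_bigr => th _.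
rewrite q_sym (phi_sym pi pi_k th sg a); last by rewrite /pi tpermR.
by rewrite /perm_act !ffunE /pi tpermV tpermL tpermD.
Qed.

Lemma sum_gain (j : 'I_n) : direct_scheme phi ->
  \sum_sg gain sg j = u_scheme q rho first_act phi - \sum_th q th * rho (th j).
Proof.
move=> phi_direct; rewrite /gain exchange_big -sumrB; apply: eq_bigr => th _.
have [_ phi_sum1] := phi_direct th.
rewrite mulr_sumr -[q th * rho _]mulr1 -phi_sum1 mulr_sumr -sumrB.
by apply: eq_bigr => sg _; rewrite mulrBr mulrA [q th * rho _ * _]mulrAC.
Qed.

Lemma symmetric_persuasive :
  direct_scheme phi -> symmetric_scheme first_act phi ->
  rhoE q rho <= u_scheme q rho first_act phi ->
  persuasive q rho first_act phi.
Proof.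
move=> phi_direct phi_sym uR_ge sg sg_pos j.
have gain_ge0 : 0 <= gain sg j.
  have [<-|sg_j] := eqVneq (first_act sg) j; first by rewrite gain_recommended.
  pose others := [pred a | first_act a != j].
  have sum_gainE : \sum_a gain a j = (#|others|)%:R * gain sg j.
    rewrite (bigID others) /= [X in _ + X]big1 ?addr0; last first.
      by move=> a /negbNE /eqP <-; rewrite gain_recommended.
    by rewrite mulr_natl -sumr_const; apply: eq_bigr => a a_j; apply: gain_swap.
  have : 0 <= \sum_a gain a j.
    by rewrite sum_gain // subr_ge0 (le_trans (action_value_le_rhoE j)).
  rewrite sum_gainE pmulr_rge0 // ltr0n; apply/card_gt0P; exists sg.
  by rewrite inE.
rewrite /cond_exp; apply: ler_wpM2r; first by rewrite invr_ge0 ltW.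
rewrite -subr_ge0 -sumrB; under eq_bigr do rewrite -mulrBr.
exact: gain_ge0.
Qed.

End Persuasion.

Section ParetoScheme.
Variables (R : realType) (T : finType) (n k : nat) (k_le_n : (k <= n)%N).
Variable q : {ffun 'I_n -> T} -> R.

Definition relevant (C : {set T}) : bool := (#|C| == k) && (0 < qC k q C).

Hypothesis q_ge0 : forall th, 0 <= q th.
Hypothesis q_inj : forall th, 0 < q th -> injective th.

Lemma relevant_first_types (th : {ffun 'I_n -> T}) :
  0 < q th -> relevant (first_types k th).
Proof.
move=> q_pos; rewrite /relevant card_first_types ?eqxx //=; last exact: q_inj.
by rewrite /qC (bigD1 th) //= ltr_wpDr // sumr_ge0.
Qed.

Variable lam : {set T} -> T -> R.
Hypothesis lam_ge0 : forall C c, relevant C -> 0 <= lam C c.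
Hypothesis lam_supp : forall C c, relevant C -> c \notin C -> lam C c = 0.
Hypothesis lam_sum1 : forall C, relevant C -> \sum_c lam C c = 1.

Notation first_act := (first_act k_le_n).

(* The scheme realising the weights: in a state whose first types form the
   relevant set C, recommend the action of type c with probability lam C c;
   elsewhere (a q-null event) recommend uniformly. *)
Definition pareto_scheme (th : {ffun 'I_n -> T}) (sg : 'I_k) : R :=
  let C := first_types k th in
  if relevant C then lam C (th (first_act sg)) else k%:R^-1.

Lemma pareto_scheme_average (th : {ffun 'I_n -> T}) (g : T -> R) :
  relevant (first_types k th) ->
  \sum_sg pareto_scheme th sg * g (th (first_act sg)) =
  \sum_c lam (first_types k th) c * g c.
Proof.
move=> rel; rewrite /pareto_scheme rel.
have /andP [/eqP card_k _] := rel.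
apply: (sum_first_types k_le_n (g := fun c => lam _ c * g c)) => // c c_out.
by rewrite lam_supp ?mul0r.
Qed.

Lemma pareto_scheme_direct : (0 < k)%N -> direct_scheme pareto_scheme.
Proof.
move=> k_gt0 th; split=> [sg|].
  by rewrite /pareto_scheme; case: ifP => [/lam_ge0 //|_]; rewrite invr_ge0 ler0n.
have [rel|not_rel] := boolP (relevant (first_types k th)).
  rewrite -(lam_sum1 rel); under eq_bigr do rewrite -[pareto_scheme _ _]mulr1.
  under [RHS]eq_bigr do rewrite -[lam _ _]mulr1.
  exact: (pareto_scheme_average (fun=> 1) rel).
rewrite /pareto_scheme (negbTE not_rel) sumr_const card_ord -[_ *+ k]mulr_natr.
by rewrite mulVf // pnatr_eq0 -lt0n.
Qed.

Lemma pareto_scheme_symmetric : symmetric_scheme first_act pareto_scheme.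
Proof.
split=> // pi pi_k th sg sg' pi_sg.
have pi_th : perm_act pi th (first_act sg') = th (first_act sg).
  by rewrite -pi_sg /perm_act ffunE permK.
by rewrite /pareto_scheme first_types_perm // pi_th.
Qed.

Lemma pareto_scheme_utility (v : T -> R) (f : {set T} -> R) :
  (forall C, relevant C -> f C = \sum_c lam C c * v c) ->
  u_scheme q v first_act pareto_scheme =
    \sum_(C : {set T} | #|C| == k) qC k q C * f C.
Proof.
move=> fE; rewrite /u_scheme (eq_bigr (fun th =>
  if #|first_types k th| == k then q th * f (first_types k th) else 0)).
  rewrite -big_mkcond (partition_big (first_types k) (fun C => #|C| == k)) //=.
  apply: eq_bigr => C card_C; rewrite /qC big_distrl /=.
  apply: eq_big => [th|th /andP [_ /eqP ->] //].
  by case: (eqVneq (first_types k th) C) => [->|]; rewrite ?andbF ?andbT ?card_C.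
move=> th _; have [q0|q_pos] := eqVneq (q th) 0.
  by rewrite q0 !mul0r; case: ifP.
have rel : relevant (first_types k th).
  by apply: relevant_first_types; rewrite lt_def q_pos q_ge0.
have /andP [card_k _] := rel.
by rewrite card_k pareto_scheme_average // fE.
Qed.

End ParetoScheme.

Definition convex_weights (R : realType) (T : finType) (rho xi : T -> R)
    (C : {set T}) (lam : T -> R) (p : R * R) : Prop :=
  [/\ forall c, 0 <= lam c, forall c, c \notin C -> lam c = 0,
      \sum_c lam c = 1 & p = (\sum_c lam c * rho c, \sum_c lam c * xi c)].

Lemma point_collection_weights (R : realType) (T : finType) (n k : nat)
    (q : {ffun 'I_n -> T} -> R) (rho xi : T -> R) (P : {set T} -> R * R) :
  point_collection k q rho xi P ->
  exists lam : {set T} -> T -> R,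
    forall C, relevant k q C -> convex_weights rho xi C (lam C) (P C).
Proof.
move=> P_conv.
apply: (choice (fun C lamC => relevant k q C -> convex_weights rho xi C lamC (P C))).
move=> C; have [/andP [/eqP card_C qC_pos]|_] := boolP (relevant k q C).
  by have [lamC lamCP] := P_conv C card_C qC_pos; exists lamC.
by exists (fun=> 0).
Qed.

Theorem lemma3p4 (R : realType) (T : finType) (n k : nat)
  (q : {ffun 'I_n -> T} -> R) (rho xi : T -> R) :
  is_distribution q -> symmetric_instance q ->
  (2 <= k)%N -> (k <= n)%N ->
  forall (s : option R), (forall s0, s = Some s0 -> s0 <= 0) ->
  forall P : {set T} -> R * R, s_Pareto k q rho xi s P ->
  exists (rec : 'I_k -> 'I_n) (phi : {ffun 'I_n -> T} -> 'I_k -> R),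
    [/\ symmetric_scheme rec phi, direct_scheme phi,
        persuasive q rho rec phi,
        u_scheme q xi rec phi = uS_pc k q P &
        u_scheme q rho rec phi = uR_pc k q P].
Proof.
move=> [q_ge0 _] [q_sym q_inj] k_ge2 k_le_n s _ P [P_conv [_ uR_ge]].
have [lam lamP] := point_collection_weights P_conv.
have lam_ge0 C c : relevant k q C -> 0 <= lam C c.
  by move=> /lamP [+ _ _ _]; apply.
have lam_supp C c : relevant k q C -> c \notin C -> lam C c = 0.
  by move=> /lamP [_ + _ _]; apply.
have lam_sum1 C : relevant k q C -> \sum_c lam C c = 1.
  by move=> /lamP [].
pose phi := pareto_scheme k_le_n q lam.
have uS : u_scheme q xi (first_act k_le_n) phi = uS_pc k q P.
  by apply: pareto_scheme_utility => // C /lamP [_ _ _ ->].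
have uR : u_scheme q rho (first_act k_le_n) phi = uR_pc k q P.
  by apply: pareto_scheme_utility => // C /lamP [_ _ _ ->].
have phi_direct : direct_scheme phi.
  by apply: pareto_scheme_direct => //; apply: leq_trans k_ge2.
have phi_sym : symmetric_scheme (first_act k_le_n) phi.
  exact: pareto_scheme_symmetric.
exists (first_act k_le_n), phi; split=> //.
by apply: symmetric_persuasive => //; rewrite uR.
Qed.
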